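(* Let $q$ be a prime power, $b$ a positive integer, and $\boldsymbol{B}$ an $M\times M$ matrix with nonnegative integer entries. Then \[ N_b(\boldsymbol{B})\ge\begin{cases}\dfrac{2q^b}{(q^b-1)M^2}\sum_{i<j}[\boldsymbol{B}]_{ij}, & \text{if } M\equiv 0\pmod{q^b},\\[2mm] \dfrac{2q^b}{(q^b-1)(M^2-1)}\sum_{i<j}[\boldsymbol{B}]_{ij}, & \text{if } M\equiv 1\pmod{q^b},\\[2mm] \dfrac{2q^b}{M^2(q^b-1)-m(q^b-m)}\sum_{i<j}[\boldsymbol{B}]_{ij}, & \text{if } M\equiv m\pmod{q^b},\ m>1.\end{cases} \]
   Context: For $\boldsymbol{z}=(z_0,\ldots,z_{n-1}),\boldsymbol{w}\in\mathbb{F}_q^n$, the $b$-symbol distance $d_b(\boldsymbol{z},\boldsymbol{w})$ is the number of $i\in\{0,\ldots,n-1\}$ with $(z_i,\ldots,z_{i+b-1})\ne(w_i,\ldots,w_{i+b-1})$ (indices mod $n$). $N_b(\boldsymbol{B})$ is the smallest $r$ such that there exist $\boldsymbol{p}_1,\ldots,\boldsymbol{p}_M\in\mathbb{F}_q^r$ (in some ordering) with $d_b(\boldsymbol{p}_i,\boldsymbol{p}_j)\ge[\boldsymbol{B}]_{ij}$ for all $i,j$. In the third case $m$ denotes the residue of $M$ modulo $q^b$, with $1<m<q^b$. *)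

From HB Require Import structures.
From mathcomp Require Import all_boot all_order all_algebra all_field.
From Stdlib Require Import ClassicalEpsilon.
Set Implicit Arguments. Unset Strict Implicit. Unset Printing Implicit Defensive.
Import GRing.Theory Num.Theory.

(* Vectors of F_q^r are r.-tuples over a finite field F (q = #|F|),
   coordinates indexed 0..r-1, indices taken modulo r. *)

Definition bdist (F : finFieldType) (b r : nat) (z w : r.-tuple F) : nat :=
  #|[set i : 'I_r | [exists k : 'I_b,
      nth 0%R z ((i + k) %% r) != nth 0%R w ((i + k) %% r)]]|.

Definition Nb_feasible (F : finFieldType) (b M : nat) (B : 'M[nat]_M) (r : nat) : bool :=
  [exists p : {ffun 'I_M -> r.-tuple F},
     [forall i : 'I_M, forall j : 'I_M, (i != j) ==> (B i j <= bdist b (p i) (p j))%N]].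

(* N_b(B): the smallest feasible length r (0 by convention if none exists,
   which never happens for b >= 1). *)
Definition Nb (F : finFieldType) (b M : nat) (B : 'M[nat]_M) : nat :=
  match excluded_middle_informative (exists r, Nb_feasible F b B r) with
  | left h => ex_minn h
  | right _ => 0%N
  end.

Definition upper_sum (M : nat) (B : 'M[nat]_M) : nat :=
  (\sum_(i < M) \sum_(j < M | (i < j)%N) B i j)%N.

Local Open Scope ring_scope.
Definition Nb_bound (q b M : nat) (B : 'M[nat]_M) : rat :=
  let Q : rat := (q ^ b)%N%:R in
  let m : nat := (M %% q ^ b)%N in
  let S : rat := (upper_sum B)%:R in
  let M2 : rat := (M ^ 2)%N%:R in
  if m == 0%N then 2 * Q / ((Q - 1) * M2) * S
  else if m == 1%N then 2 * Q / ((Q - 1) * (M2 - 1)) * S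
  else 2 * Q / (M2 * (Q - 1) - m%:R * (Q - m%:R)) * S.

From HB Require Import structures.
From mathcomp Require Import all_boot all_order all_algebra all_field.
From mathcomp Require Import zify ring lra.
From Stdlib Require Import ClassicalEpsilon.
Set Implicit Arguments.
Unset Strict Implicit.
Unset Printing Implicit Defensive.

Import Order.TTheory GRing.Theory Num.Theory.

(* At a fixed position t the windows of the M codewords are M letters of an
   alphabet of size Q = q^b.  If letter c occurs n_c times, exactly
   M^2 - sum_c n_c^2 ordered pairs of codewords differ at t, and
   Q * sum_c n_c^2 >= M^2 + m (Q - m) with m = M mod Q, the value attained by
   the most balanced counts.  Summing over the r positions,
   2 sum_{i<j} B_ij <= sum_{i,j} d_b(p_i, p_j) <= r (M^2 (Q - 1) - m (Q - m)) / Q,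
   and the three cases of the bound are all 2 Q S / (M^2 (Q - 1) - m (Q - m)). *)

Lemma sum_sqr_lower_bound (T : finType) (n : T -> nat) (N : nat) :
  (\sum_c n c)%N = N ->
  (N ^ 2 + (N %% #|T|) * (#|T| - N %% #|T|) <= #|T| * \sum_c n c ^ 2)%N.
Proof.
move=> sum_n; set m := (N %% _)%N; set Q := #|T|.
have [Q0 | Qpos] := posnP Q.
  by rewrite /m -sum_n big_pred0 ?mod0n // => c; have := card0_eq Q0 c.
set a := (N %/ Q)%N.
(* (n - a) (n - a - 1) >= 0 *)
have tangent c : ((2 * a + 1) * n c <= n c ^ 2 + a * (a + 1))%N.
  rewrite -mulnn; case: (leqP (n c) a) => [/subnK <- | /subnK <-]; nia.
have summed : ((2 * a + 1) * N <= \sum_c n c ^ 2 + Q * (a * (a + 1)))%N.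
  rewrite -sum_n big_distrr -sum_nat_const -big_split /=.
  exact: leq_sum.
have N_eq : N = (a * Q + m)%N by rewrite /a /m -divn_eq.
have m_lt : (m < Q)%N by rewrite ltn_mod.
have [k Q_eq] : exists k, Q = (m + k)%N by exists (Q - m)%N; lia.
move: summed; rewrite N_eq Q_eq addKn; set X := (\sum_c _)%N => summed.
have := leq_mul (leqnn (m + k)) summed.
nia.
Qed.

Section Fibres.
Variables (I T : finType) (f : I -> T).

Lemma sum_card_fibres : (\sum_c #|[set i | f i == c]| = #|I|)%N.
Proof.
rewrite -sum1_card (partition_big f predT) //.
by apply: eq_bigr => c _; rewrite sum1dep_card.
Qed.

Lemma sum_pairs_eq_sqr_fibres :
  (\sum_i \sum_j (f i == f j) = \sum_c #|[set i | f i == c]| ^ 2)%N.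
Proof.
transitivity (\sum_i #|[set j | f j == f i]|)%N.
  apply: eq_bigr => i _; rewrite -sum1dep_card [RHS]big_mkcond /=.
  by apply: eq_bigr => j _; rewrite eq_sym; case: eqP.
rewrite (partition_big f predT) //; apply: eq_bigr => c _.
rewrite (eq_bigr (fun=> #|[set j | f j == c]|)) => [|i /eqP -> //].
by rewrite sum_nat_cond_const mulnn.
Qed.

Lemma sum_pairs_neq_upper_bound :
  (#|T| * \sum_i \sum_j (f i != f j) + (#|I| ^ 2 + (#|I| %% #|T|) * (#|T| - #|I| %% #|T|))
    <= #|T| * #|I| ^ 2)%N.
Proof.
have split_pairs :
    (\sum_i \sum_j (f i != f j) + \sum_i \sum_j (f i == f j) = #|I| ^ 2)%N.
  rewrite -mulnn -sum_nat_const -big_split /=; apply: eq_bigr => i _.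
  rewrite -big_split /= -[#|I|]muln1 -sum_nat_const; apply: eq_bigr => j _.
  by case: (f i == f j).
have := sum_sqr_lower_bound sum_card_fibres.
rewrite -sum_pairs_eq_sqr_fibres -split_pairs.
set m := (_ %% _)%N; set D := (\sum_i _)%N; set E := (\sum_i _)%N.
rewrite mulnDr; lia.
Qed.

End Fibres.

Lemma sum_pairs_sym n (g : 'I_n -> 'I_n -> nat) :
  (forall i j, g i j = g j i) -> (forall i, g i i = 0%N) ->
  (\sum_(i < n) \sum_(j < n) g i j = 2 * \sum_(i < n) \sum_(j < n | i < j) g i j)%N.
Proof.
move=> g_sym g_diag.
have split_diag (i j : 'I_n) :
    g i j = ((if i < j then g i j else 0) + (if j < i then g j i else 0))%N.
  case: ltngtP => [_ | _ | /val_inj ->]; rewrite ?addn0 ?add0n ?g_diag //.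
under eq_bigr => i _ do under eq_bigr => j _ do rewrite split_diag.
under eq_bigr => i _ do rewrite big_split /=.
rewrite big_split /= [X in (_ + X)%N]exchange_big /= addnn -mul2n.
by congr (2 * _)%N; apply: eq_bigr => i _; rewrite [RHS]big_mkcond.
Qed.

Definition window (F : finFieldType) (b r : nat) (t : 'I_r) (z : r.-tuple F) :
    {ffun 'I_b -> F} :=
  [ffun k : 'I_b => nth 0%R z ((t + k) %% r)].

Arguments window {F} b {r} t z.

Section BSymbolDistance.
Variables (F : finFieldType) (b r : nat).
Implicit Types z w : r.-tuple F.

Lemma bdist_window z w :
  bdist b z w = (\sum_(t < r) (window b t z != window b t w))%N.
Proof.
rewrite /bdist -sum1_card big_mkcond /=; apply: eq_bigr => t _.
rewrite inE; congr (nat_of_bool _).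
rewrite -negb_forall; congr (~~ _).
apply/forallP/eqP => [eq_k | /ffunP eq_zw k].
  by apply/ffunP => k; rewrite !ffunE; apply/eqP.
by have := eq_zw k; rewrite !ffunE => ->.
Qed.

Lemma bdist_sym z w : bdist b z w = bdist b w z.
Proof. by rewrite !bdist_window; apply: eq_bigr => t _; rewrite eq_sym. Qed.

Lemma bdist_refl z : bdist b z z = 0%N.
Proof. by rewrite bdist_window big1 // => t _; rewrite eqxx. Qed.

Lemma hamming_le_bdist z w :
  (0 < b)%N -> (#|[set t : 'I_r | tnth z t != tnth w t]| <= bdist b z w)%N.
Proof.
move=> b_gt0; apply/subset_leq_card/subsetP => t; rewrite !inE => neq_t.
apply/existsP; exists (Ordinal b_gt0).
by rewrite /= addn0 modn_small // -!tnth_nth.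
Qed.

End BSymbolDistance.

Section Codes.
Variables (F : finFieldType) (b M : nat) (B : 'M[nat]_M).
Hypothesis b_gt0 : (0 < b)%N.

Local Notation Q := (#|F| ^ b)%N.
Local Notation m := (M %% Q)%N.

Lemma Nb_feasible_exists : exists r, Nb_feasible F b B r.
Proof.
(* Codeword i is the indicator of the i-th block of length K = max B. *)
pose K := (\max_(ij : 'I_M * 'I_M) B ij.1 ij.2)%N.
exists (M * K)%N; apply/existsP.
exists [ffun i : 'I_M => [tuple ((t %/ K == i)%N%:R : F)%R | t < M * K]].
apply/forallP => i; apply/forallP => j; apply/implyP => neq_ij.
have le_B_K : (B i j <= K)%N := leq_bigmax (F := fun ij => B ij.1 ij.2) (i, j).
apply: leq_trans le_B_K (leq_trans _ (hamming_le_bdist _ _ b_gt0)); rewrite !ffunE.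
have block (k : 'I_K) : (i * K + k < M * K)%N.
  by have := ltn_ord i; have := ltn_ord k; nia.
pose at_block k := Ordinal (block k).
have at_block_inj : injective at_block.
  by move=> k1 k2 /(congr1 val)/addnI/val_inj.
have card_blocks : #|[set at_block k | k : 'I_K]| = K.
  by rewrite card_imset // card_ord.
rewrite -[X in (X <= _)%N]card_blocks.
apply: subset_leq_card; apply/subsetP => _ /imsetP[k _ ->]; rewrite inE !tnth_mktuple /=.
have K_gt0 : (0 < K)%N by apply: leq_ltn_trans (ltn_ord k).
rewrite divnMDl // divn_small // addn0 eqxx val_eqE (negbTE neq_ij).
exact: oner_neq0.
Qed.

Lemma Nb_feasible_Nb : Nb_feasible F b B (Nb F b B).
Proof.
rewrite /Nb; case: excluded_middle_informative => [feasible | []].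
  by case: ex_minnP.
exact: Nb_feasible_exists.
Qed.

Lemma Nb_feasible_upper_sum r :
  Nb_feasible F b B r ->
  (2 * Q * upper_sum B + r * (M ^ 2 + m * (Q - m)) <= r * (Q * M ^ 2))%N.
Proof.
move=> /existsP[p /forallP code_p].
pose d i j := bdist b (p i) (p j).
pose X (t : 'I_r) := (\sum_i \sum_j (window b t (p i) != window b t (p j)))%N.
have sum_d_ge : (2 * upper_sum B <= \sum_i \sum_j d i j)%N.
  rewrite sum_pairs_sym => [|i j|i]; last 2 first.
  - exact: bdist_sym.
  - exact: bdist_refl.
  rewrite leq_mul2l; apply/orP; right.
  apply: leq_sum => i _; apply: leq_sum => j lt_ij.
  have /forallP/(_ j)/implyP := code_p i; apply.
  by apply: contraTneq lt_ij => ->; rewrite ltnn.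
have sum_d_windows : (\sum_i \sum_j d i j = \sum_t X t)%N.
  under eq_bigr => i _ do under eq_bigr => j _ do rewrite /d bdist_window.
  by under eq_bigr => i _ do rewrite exchange_big; rewrite exchange_big.
have X_le t : (Q * X t + (M ^ 2 + m * (Q - m)) <= Q * M ^ 2)%N.
  have := sum_pairs_neq_upper_bound (fun i => window b t (p i)).
  by rewrite card_ffun !card_ord.
have : (\sum_(t < r) (Q * X t + (M ^ 2 + m * (Q - m))) <= \sum_(t < r) Q * M ^ 2)%N.
  by apply: leq_sum => t _; apply: X_le.
rewrite big_split -big_distrr /= !sum_nat_const card_ord -sum_d_windows.
apply: leq_trans; rewrite leq_add2r mulnAC mulnC.
exact: leq_mul (leqnn Q) sum_d_ge.
Qed.

End Codes.

Lemma Nb_boundE q b M (B : 'M[nat]_M) :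
  Nb_bound q b B =
  (2 * (q ^ b)%N%:R / ((M ^ 2)%N%:R * ((q ^ b)%N%:R - 1)
                       - (M %% q ^ b)%N%:R * ((q ^ b)%N%:R - (M %% q ^ b)%N%:R))
   * (upper_sum B)%:R)%R.
Proof.
rewrite /Nb_bound; case: eqP => [-> | _]; first by congr (_ / _ * _)%R; ring.
by case: eqP => [-> | _] //; congr (_ / _ * _)%R; ring.
Qed.

Lemma ler_wdivrMr (R : realFieldType) (x y z : R) :
  (0 <= x -> 0 <= y -> x <= y * z -> x / z <= y)%R.
Proof.
move=> x_ge0 y_ge0 le_x_yz; have [z_gt0 | z_le0] := ltrP 0 z.
  by rewrite ler_pdivrMr.
by apply: le_trans y_ge0; rewrite mulr_ge0_le0 // invr_le0.
Qed.

Theorem lemma4p1 (F : finFieldType) (b M : nat) (B : 'M[nat]_M) :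
  (0 < b)%N ->
  (Nb_bound #|F| b B <= (Nb F b B)%:R)%R.
Proof.
move=> b_gt0; rewrite Nb_boundE mulrAC.
apply: ler_wdivrMr; rewrite ?mulr_ge0 ?ler0n //.
have m_le_Q : (M %% #|F| ^ b <= #|F| ^ b)%N.
  have F_gt0 : (0 < #|F|)%N by apply/card_gt0P; exists 0%R.
  by rewrite ltnW // ltn_mod expn_gt0 F_gt0.
have := Nb_feasible_upper_sum (Nb_feasible_Nb F B b_gt0).
rewrite -(ler_nat rat) !(natrD, natrM, natrB _ m_le_Q).
lra.
Qed.
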